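(* Let $n\ge2$, let $a=(a_1,\dots,a_n)$ and $b=(b_1,\dots,b_n)$ be real sequences, and let $t=(t_1,\dots,t_n)\in T_a\cap T_b$. Then $$\sum_{i=1}^n a_ib_i-\frac1n\sum_{i=1}^n a_i\sum_{i=1}^n b_i\ge K_n(t)\sum_{i=1}^n\Big(t_i-\frac1n\sum_{j=1}^n t_j\Big)a_i\cdot\sum_{i=1}^n\Big(t_i-\frac1n\sum_{j=1}^n t_j\Big)b_i,$$ where $K_n(t)=\left(\sum_{i=1}^n t_i^2-\frac1n\big(\sum_{i=1}^n t_i\big)^2\right)^{-1}$.
   Context: For a real sequence $(x_i)$, $\Delta x_i=x_{i+1}-x_i$. ''Increasing'' means strictly increasing. For a real sequence $a=(a_i)_{i=1}^n$, $T_a$ denotes the set of increasing real sequences $(t_i)_{i=1}^n$ such that $(\Delta a_i/\Delta t_i)_{i=1}^{n-1}$ is non-decreasing. *)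

From mathcomp Require Import all_boot all_order all_algebra.
Set Implicit Arguments. Unset Strict Implicit. Unset Printing Implicit Defensive.
Import Order.TTheory GRing.Theory Num.Theory.
Local Open Scope ring_scope.

(* Sequences (x_1,...,x_n) are represented 0-indexed as x : nat -> R,
   only the values x 0, ..., x (n-1) matter. *)

Definition Delta (R : ringType) (x : nat -> R) (i : nat) : R := x i.+1 - x i.

Definition increasing_seq (R : realFieldType) (n : nat) (t : nat -> R) : Prop :=
  forall i j : nat, (i < j)%N -> (j < n)%N -> t i < t j.

Definition T_set (R : realFieldType) (n : nat) (a : nat -> R) (t : nat -> R) : Prop :=
  increasing_seq n t /\
  forall i j : nat, (i <= j)%N -> (j.+1 < n)%N ->
    Delta a i / Delta t i <= Delta a j / Delta t j.

Definition mean (R : realFieldType) (n : nat) (x : nat -> R) : R :=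
  n%:R^-1 * \sum_(0 <= i < n) x i.

Definition K_n (R : realFieldType) (n : nat) (t : nat -> R) : R :=
  (\sum_(0 <= i < n) t i ^+ 2 - n%:R^-1 * (\sum_(0 <= i < n) t i) ^+ 2)^-1.

From mathcomp Require Import all_boot all_order all_algebra.
From mathcomp Require Import ring lra zify.
Import Order.TTheory GRing.Theory Num.Theory.
Local Open Scope ring_scope.

(* Let y := (a - mean a) - alpha (t - mean t) with alpha := cov(t, a) / cov(t, t) be the
   residual of the least-squares fit of a on t.  Then sum y = sum y t = 0, and the inequality
   becomes sum y b >= 0.  The slopes Delta y / Delta t are those of a shifted by -alpha, hence
   non-decreasing, so y never has the sign pattern -, +, - and the tail sums
   S_l = sum_{i > l} y_i never pass from positive to negative.  By Abel summation,
   sum y b = sum_l (Delta t_l S_l) (Delta b_l / Delta t_l) and sum_l Delta t_l S_l = sum y t = 0;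
   the sign pattern makes the tail sums of (Delta t_l S_l) non-negative, so pairing them with
   the non-decreasing weights Delta b_l / Delta t_l gives a non-negative sum. *)

Lemma abel_summation (R : comNzRingType) (N : nat) (y b : nat -> R) :
  \sum_(0 <= i < N.+1) y i * b i =
  b 0%N * \sum_(0 <= i < N.+1) y i
  + \sum_(0 <= l < N) (b l.+1 - b l) * \sum_(l.+1 <= i < N.+1) y i.
Proof.
elim: N => [|N IH]; first by rewrite !big_nat1 big_geq // addr0 mulrC.
have tails_rec : \sum_(0 <= l < N.+1) (b l.+1 - b l) * \sum_(l.+1 <= i < N.+2) y i
   = \sum_(0 <= l < N) (b l.+1 - b l) * \sum_(l.+1 <= i < N.+1) y i
     + y N.+1 * \sum_(0 <= l < N) (b l.+1 - b l) + (b N.+1 - b N) * y N.+1.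
  rewrite big_nat_recr //= big_nat1 mulr_sumr -big_split /=; congr (_ + _).
  rewrite big_nat [RHS]big_nat; apply: eq_bigr => l /andP[_ lN].
  by rewrite big_nat_recr /=; [ring | exact: ltnW].
rewrite big_nat_recr //= IH tails_rec telescope_sumr // [in RHS]big_nat_recr //=.
ring.
Qed.

Section SignedSums.
Context {R : realDomainType}.
Implicit Types (F : nat -> R) (m k : nat).

Lemma sum_lt0_exists {m k F} :
  \sum_(m <= i < k) F i < 0 -> exists2 i, (m <= i < k)%N & F i < 0.
Proof.
have [/hasP[i]|/hasPn F_ge0] := boolP (has (fun i => F i < 0) (index_iota m k)).
  by rewrite mem_index_iota; exists i.
rewrite ltNge big_nat sumr_ge0 => [//|i mik].
by rewrite leNgt F_ge0 // mem_index_iota.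
Qed.

Lemma sum_gt0_exists {m k F} :
  0 < \sum_(m <= i < k) F i -> exists2 i, (m <= i < k)%N & 0 < F i.
Proof.
move=> F_gt0; have [|i mik] := @sum_lt0_exists m k (fun i => - F i).
  by rewrite sumrN oppr_lt0.
by rewrite oppr_lt0; exists i.
Qed.

Lemma tail_sum_ge0 N F :
  \sum_(0 <= k < N) F k = 0 ->
  (forall i j, (i < j)%N -> (j < N)%N -> 0 < F i -> F j < 0 -> False) ->
  forall l, 0 <= \sum_(l <= k < N) F k.
Proof.
move=> F_sum0 no_pos_neg l; have [lN|Nl] := leqP l N; last by rewrite big_geq // (ltnW Nl).
rewrite leNgt; apply/negP => tail_lt0.
have [j /andP[lj jN] Fj] := sum_lt0_exists tail_lt0.
have head_gt0 : 0 < \sum_(0 <= k < l) F k.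
  by move: F_sum0; rewrite (big_cat_nat (leq0n l) lN) /=; lra.
have [i /andP[_ il] Fi] := sum_gt0_exists head_gt0.
exact: no_pos_neg i j (leq_trans il lj) jN Fi Fj.
Qed.

Lemma ler_sum_mul_nondecr N F (g : nat -> R) :
  (forall l, 0 <= \sum_(l <= k < N) F k) ->
  (forall i j, (i <= j)%N -> (j < N)%N -> g i <= g j) ->
  g 0%N * \sum_(0 <= k < N) F k <= \sum_(0 <= k < N) F k * g k.
Proof.
case: N => [|N] tail_ge0 g_nondecr; first by rewrite !big_geq // mulr0.
rewrite abel_summation lerDl big_nat sumr_ge0 // => l /andP[_ lN].
by rewrite mulr_ge0 ?subr_ge0 ?g_nondecr.
Qed.

End SignedSums.

Section Slopes.
Context {R : realFieldType} {n : nat} {t : nat -> R}.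

Lemma T_set_Delta_gt0 {a i} : T_set n a t -> (i.+1 < n)%N -> 0 < Delta t i.
Proof. by move=> [t_incr _] i_lt; rewrite subr_gt0 t_incr. Qed.

Lemma T_set_sub_slope {a y : nat -> R} (alpha : R) :
  T_set n a t -> (forall i, Delta y i = Delta a i - alpha * Delta t i) -> T_set n y t.
Proof.
move=> Ta Dy; have [t_incr slope_a] := Ta; split=> // i j ij jn.
have slopeE k : (k.+1 < n)%N -> Delta y k / Delta t k = Delta a k / Delta t k - alpha.
  by move=> kn; rewrite Dy mulrBl mulfK // gt_eqF // (T_set_Delta_gt0 Ta).
by rewrite !slopeE ?lerD2r ?slope_a //; lia.
Qed.

Lemma T_set_no_neg_pos_neg {y : nat -> R} {p q k} :
  T_set n y t -> (p < q)%N -> (q < k)%N -> (k < n)%N ->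
  y p < 0 -> 0 < y q -> y k < 0 -> False.
Proof.
move=> Ty pq qk kn yp yq yk; have [_ slope_y] := Ty.
have [u /andP[pu uq] Dyu] : exists2 u, (p <= u < q)%N & 0 < Delta y u.
  by apply: sum_gt0_exists; rewrite /Delta telescope_sumr ?(ltnW pq) //; lra.
have [v /andP[qv vk] Dyv] : exists2 v, (q <= v < k)%N & Delta y v < 0.
  by apply: sum_lt0_exists; rewrite /Delta telescope_sumr ?(ltnW qk) //; lra.
have slope_u : 0 < Delta y u / Delta t u.
  by rewrite divr_gt0 // (T_set_Delta_gt0 Ty); lia.
have slope_v : Delta y v / Delta t v < 0.
  by rewrite pmulr_llt0 // invr_gt0 (T_set_Delta_gt0 Ty); lia.
have : Delta y u / Delta t u <= Delta y v / Delta t v by apply: slope_y; lia.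
lra.
Qed.

Lemma T_set_tail_sums (y : nat -> R) i j :
  T_set n y t -> \sum_(0 <= k < n) y k = 0 -> (i < j)%N ->
  0 < \sum_(i.+1 <= k < n) y k -> \sum_(j.+1 <= k < n) y k < 0 -> False.
Proof.
move=> Ty y_sum0 ij Si Sj.
have [k /andP[jk kn] yk] := sum_lt0_exists Sj.
have [p /andP[_ pi] yp] : exists2 p, (0 <= p < i.+1)%N & y p < 0.
  apply: sum_lt0_exists; move: y_sum0.
  by rewrite (big_cat_nat (leq0n i.+1) (_ : i.+1 <= n)%N) /=; [lra | lia].
have [q /andP[iq qj] yq] : exists2 q, (i.+1 <= q < j.+1)%N & 0 < y q.
  apply: sum_gt0_exists; move: Si.
  by rewrite (big_cat_nat (_ : i.+1 <= j.+1)%N (_ : j.+1 <= n)%N) /=; [lra | lia | lia].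
by apply: (T_set_no_neg_pos_neg Ty _ _ kn yp yq yk); lia.
Qed.

Lemma T_set_sum_mul_ge0 {y b : nat -> R} :
  T_set n y t -> T_set n b t ->
  \sum_(0 <= i < n) y i = 0 -> \sum_(0 <= i < n) y i * t i = 0 ->
  0 <= \sum_(0 <= i < n) y i * b i.
Proof.
move=> Ty [_ slope_b] y_sum0 yt_sum0.
have [n0|n_gt0] := posnP n; first by rewrite n0 big_geq.
pose S l := \sum_(l.+1 <= i < n) y i.
pose f l := Delta t l * S l.
have abel w : \sum_(0 <= i < n) y i * w i
    = w 0%N * \sum_(0 <= i < n) y i + \sum_(0 <= l < n.-1) (w l.+1 - w l) * S l.
  by have := abel_summation _ n.-1 y w; rewrite prednK.
have f_sum0 : \sum_(0 <= l < n.-1) f l = 0.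
  by move: yt_sum0; rewrite abel y_sum0 mulr0 add0r.
have -> : \sum_(0 <= i < n) y i * b i = \sum_(0 <= l < n.-1) f l * (Delta b l / Delta t l).
  rewrite abel y_sum0 mulr0 add0r big_nat [RHS]big_nat.
  apply: eq_bigr => l /andP[_ ln].
  by rewrite [RHS]mulrC mulrA divfK // gt_eqF // (T_set_Delta_gt0 Ty); lia.
apply: le_trans (ler_sum_mul_nondecr n.-1 f (fun l => Delta b l / Delta t l) _ _).
- by rewrite f_sum0 mulr0.
- apply: tail_sum_ge0 f_sum0 _ => i j ij jn.
  rewrite pmulr_rgt0 ?pmulr_rlt0 ?(T_set_Delta_gt0 Ty); try lia.
  exact: T_set_tail_sums.
- by move=> i j ij jn; apply: slope_b; lia.
Qed.

End Slopes.

Definition cov {R : realFieldType} (n : nat) (x y : nat -> R) : R :=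
  \sum_(0 <= i < n) (x i - mean n x) * y i.

Section Covariance.
Context {R : realFieldType} {n : nat}.
Implicit Types x y t : nat -> R.

Lemma covE x y :
  cov n x y = \sum_(0 <= i < n) x i * y i
              - n%:R^-1 * (\sum_(0 <= i < n) x i) * (\sum_(0 <= i < n) y i).
Proof. by rewrite /cov /mean [in RHS]mulr_sumr -sumrB; apply: eq_bigr => i _; ring. Qed.

Lemma covC x y : cov n x y = cov n y x.
Proof.
by rewrite !covE mulrAC; congr (_ - _); apply: eq_bigr => i _; rewrite mulrC.
Qed.

Lemma K_nE t : K_n n t = (cov n t t)^-1.
Proof. by rewrite covE /K_n expr2 mulrA. Qed.

Lemma sum_sub_mean x : (0 < n)%N -> \sum_(0 <= i < n) (x i - mean n x) = 0.
Proof.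
move=> n_gt0; rewrite sumrB sumr_const_nat subn0 /mean -[_ *+ n]mulr_natl mulrA.
by rewrite mulfV ?mul1r ?subrr // pnatr_eq0 -lt0n.
Qed.

Lemma cov_self_gt0 t : (1 < n)%N -> increasing_seq n t -> 0 < cov n t t.
Proof.
move=> n_gt1 t_incr; have n_gt0 : (0 < n)%N by lia.
have -> : cov n t t = \sum_(0 <= i < n) (t i - mean n t) ^+ 2.
  have : cov n t t = \sum_(0 <= i < n) (t i - mean n t) ^+ 2
                     + mean n t * \sum_(0 <= i < n) (t i - mean n t).
    by rewrite mulr_sumr -big_split; apply: eq_bigr => i _ /=; ring.
  by rewrite sum_sub_mean // mulr0 addr0.
rewrite lt_def sumr_ge0 ?andbT => [|i _]; last exact: sqr_ge0.
rewrite psumr_eq0 => [|i _]; last exact: sqr_ge0.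
apply/allP => /= all0.
have centered i : (i < n)%N -> t i = mean n t.
  move=> i_lt; apply/eqP; rewrite -subr_eq0 -sqrf_eq0.
  by have := all0 i; rewrite mem_index_iota i_lt; apply.
by have := t_incr 0%N 1%N isT n_gt1; rewrite !centered ?ltxx.
Qed.

End Covariance.

Theorem corollary4p2 (R : realFieldType) (n : nat) (a b t : nat -> R) :
  (2 <= n)%N -> T_set n a t -> T_set n b t ->
  \sum_(0 <= i < n) a i * b i
    - n%:R^-1 * (\sum_(0 <= i < n) a i) * (\sum_(0 <= i < n) b i)
  >= K_n n t * (\sum_(0 <= i < n) (t i - mean n t) * a i)
             * (\sum_(0 <= i < n) (t i - mean n t) * b i).
Proof.
move=> n_ge2 Ta Tb; have n_gt0 : (0 < n)%N by lia.
rewrite -covE K_nE -/(cov n t a) -/(cov n t b).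
have var_gt0 : 0 < cov n t t by apply: cov_self_gt0 => //; case: Ta.
set alpha := cov n t a / cov n t t.
pose y i := a i - mean n a - alpha * (t i - mean n t).
have sum_y_mul w : \sum_(0 <= i < n) y i * w i = cov n a w - alpha * cov n t w.
  by rewrite /cov mulr_sumr -sumrB; apply: eq_bigr => i _; rewrite /y; ring.
have Ty : T_set n y t.
  by apply: (T_set_sub_slope alpha Ta) => i; rewrite /Delta /y; ring.
have y_sum0 : \sum_(0 <= i < n) y i = 0.
  by rewrite /y sumrB -mulr_sumr !sum_sub_mean // mulr0 subr0.
have yt_sum0 : \sum_(0 <= i < n) y i * t i = 0.
  by rewrite sum_y_mul covC /alpha divfK ?subrr // gt_eqF.
have := T_set_sum_mul_ge0 Ty Tb y_sum0 yt_sum0; rewrite sum_y_mul /alpha.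
lra.
Qed.
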